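(* Let $\Sigma$ be a finite alphabet, $M\in\mathbb N$, $Z\subseteq\Sigma^{\mathbb Z}$ a sofic shift of $M$-finite type, $A:\Sigma\to\mathbb R^{n\times n}$, and consider the switched linear system $x(k+1)=A(z_k)x(k)$, $\bar z\in Z$, with solution $\Phi(k,x_0,\bar z)$. Fix $\gamma\in[0,1)$. The following are equivalent: (1) for every $\tilde\gamma\in(\gamma,1)$ the system is uniformly exponentially stable with decay rate $\tilde\gamma$, i.e. there is $c>0$ with $|\Phi(k,x_0,\bar z)|\le c\,\tilde\gamma^k|x_0|$ for all $k\in\mathbb N,x_0\in\mathbb R^n,\bar z\in Z$; (2) for every $\tilde\gamma\in(\gamma,1)$ there exist $K\ge\max(M,1)$, $k\in\{0,\dots,K\}$, $M_1,M_2>0$ and $Q:\Sigma^K\cap\mathcal L(Z)\to\mathbb S^n_+$ such that $M_1I_n\preceq Q(w)\preceq M_2I_n$ for all $w\in S_{K,k}(Z)$ and $A(h)^\top Q(j)A(h)\prec\tilde\gamma^2Q(w)$ for all $(w,j,h)\in E_{K,k}(Z)$.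
   Context: $\Sigma^{\mathbb Z}$: bi-infinite sequences over $\Sigma$; $\mathcal L(Z)$: words $w$ of length $K$ (any $K$) such that some $\bar z\in Z$ has $(z_0,\dots,z_{K-1})=w$; a sofic shift is the set of labels of bi-infinite walks in a finite edge-labeled graph. $Z$ is of $M$-finite type if for all words $u,v,w$: $u\cdot v\in\mathcal L(Z)$, $v\cdot w\in\mathcal L(Z)$, $|v|\ge M$ imply $u\cdot v\cdot w\in\mathcal L(Z)$. For $w=(w_0,\dots,w_{K-1})$, $w^-=(w_0,\dots,w_{K-2})$, $w^+=(w_1,\dots,w_{K-1})$. Generalized De Bruijn graph $\mathcal G_{K,k}(Z)=(S_{K,k}(Z),E_{K,k}(Z))$: nodes $S_{K,k}(Z)=\Sigma^K\cap\mathcal L(Z)$; $(w,j,h)\in E_{K,k}(Z)$ iff $w^+=j^-$, $(w_0,\dots,w_{K-1},j_{K-1})\in\mathcal L(Z)$, and $h=j_{K-1}$ if $k=0$, $h=w_{K-k}$ if $1\le k\le K$. $\mathbb S^n_+$: symmetric positive definite matrices; $\preceq,\prec$ Loewner order. *)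

From HB Require Import structures.
From mathcomp Require Import all_boot all_order all_algebra.
From mathcomp Require Import reals.
Set Implicit Arguments. Unset Strict Implicit. Unset Printing Implicit Defensive.
Import Order.TTheory GRing.Theory Num.Theory.
Local Open Scope ring_scope.

Definition biseq (Sigma : Type) := int -> Sigma.

(* Z is sofic: the set of labels of bi-infinite walks in a finite edge-labelled
   graph with vertices 'I_nv and edges 'I_ne (edge e goes from src e to tgt e,
   labelled lab e). *)
Definition sofic (Sigma : Type) (Z : biseq Sigma -> Prop) : Prop :=
  exists (nv ne : nat) (src tgt : 'I_ne -> 'I_nv) (lab : 'I_ne -> Sigma),
    forall z : biseq Sigma,
      Z z <-> exists walk : int -> 'I_ne,
        forall i : int, tgt (walk i) = src (walk (i + 1)) /\ lab (walk i) = z i.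

Definition inL (Sigma : Type) (Z : biseq Sigma -> Prop) (w : seq Sigma) : Prop :=
  exists z, Z z /\ [seq z (Posz i) | i <- iota 0 (size w)] = w.

Definition finite_type (Sigma : Type) (Z : biseq Sigma -> Prop) (M : nat) : Prop :=
  forall u v w : seq Sigma,
    inL Z (u ++ v) -> inL Z (v ++ w) -> (M <= size v)%N -> inL Z (u ++ v ++ w).

Fixpoint Phi (R : ringType) (Sigma : Type) (n : nat) (A : Sigma -> 'M[R]_n)
    (k : nat) (x0 : 'cV[R]_n) (z : biseq Sigma) : 'cV[R]_n :=
  match k with
  | 0 => x0
  | k'.+1 => A (z (Posz k')) *m Phi A k' x0 z
  end.

Definition vnorm (R : rcfType) (n : nat) (x : 'cV[R]_n) : R :=
  Num.sqrt (\sum_(i < n) (x i 0) ^+ 2).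

Definition qform (R : ringType) (n : nat) (P : 'M[R]_n) (x : 'cV[R]_n) : R :=
  (x^T *m P *m x) 0 0.

Definition psd (R : numDomainType) (n : nat) (P : 'M[R]_n) : Prop :=
  P^T = P /\ forall x : 'cV[R]_n, 0 <= qform P x.
Definition pd (R : numDomainType) (n : nat) (P : 'M[R]_n) : Prop :=
  P^T = P /\ forall x : 'cV[R]_n, x != 0 -> 0 < qform P x.

Definition loewner_le (R : numDomainType) (n : nat) (P Q : 'M[R]_n) : Prop := psd (Q - P).
Definition loewner_lt (R : numDomainType) (n : nat) (P Q : 'M[R]_n) : Prop := pd (Q - P).

(* edges of the generalized De Bruijn graph G_{K,k}(Z):
   (w,j,h) is an edge iff w, j are nodes, w^+ = j^-, (w_0..w_{K-1}, j_{K-1}) in L(Z),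
   and h = j_{K-1} if k = 0, h = w_{K-k} if 1 <= k <= K.
   Here a stands for j_{K-1}, so that j = rcons w^+ a  (K >= 1). *)
Definition dbedge (Sigma : Type) (Z : biseq Sigma -> Prop) (K k : nat)
    (w j : K.-tuple Sigma) (h : Sigma) : Prop :=
  inL Z w /\ inL Z j /\
  exists a : Sigma,
    (j : seq Sigma) = rcons (behead w) a /\ inL Z (rcons w a) /\
    h = (if k == 0%N then a else nth a w (K - k)).

From HB Require Import structures.
From mathcomp Require Import all_boot all_order all_algebra.
From mathcomp Require Import reals.
From mathcomp Require Import ring lra.
Set Implicit Arguments. Unset Strict Implicit. Unset Printing Implicit Defensive.
Import Order.TTheory GRing.Theory Num.Theory.
Local Open Scope ring_scope.

(* Write [d = K - k] and [w_t] for the window [z_t ... z_(t+K-1)] of a signal [z] in [Z].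
   Consecutive windows are joined by the edge [(w_t, w_(t+1), z_(t+d))] of the De Bruijn
   graph, so the Lyapunov condition makes [V t = Q(w_t)[x(t+d)]] contract by [gt^2] at each
   step; with [M1 <= Q <= M2] this gives exponential decay after time [d], and the first [d]
   steps only cost a constant factor.
   Conversely, given decay at a rate [rho] in [(gamma, gt)], take [k = K] and
   [Q(w) = sum_(i < K) gt^(-2i) P_i(w)^T P_i(w)] with [P_i(w) = A(w_(i-1)) ... A(w_0)]:
   along an edge the sum shifts by one index, so [A(h)^T Q(j) A(h) - gt^2 Q(w)] reduces to
   [gt^2 (P_K(w)^T P_K(w) / gt^(2K) - 1)], which is negative definite once [(rho/gt)^(2K)] beats the
   stability constant. *)

Section QuadraticForms.

Variables (R : realFieldType) (n : nat).
Implicit Types (a : R) (P Q : 'M[R]_n) (x : 'cV[R]_n).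

Definition sqnorm x : R := (x^T *m x) 0 0.

Lemma sqnormE x : sqnorm x = \sum_i x i 0 ^+ 2.
Proof. by rewrite /sqnorm mxE; apply: eq_bigr => i _; rewrite mxE expr2. Qed.

Lemma sqnorm_ge0 x : 0 <= sqnorm x.
Proof. by rewrite sqnormE sumr_ge0 // => i _; rewrite sqr_ge0. Qed.

Lemma sqnorm_gt0 x : x != 0 -> 0 < sqnorm x.
Proof.
apply: contraNT; rewrite -leNgt sqnormE => sum_le0; apply/eqP/matrixP => i j.
rewrite ord1 mxE; apply/eqP; rewrite -sqrf_eq0 eq_le sqr_ge0 andbT.
by apply: le_trans sum_le0; rewrite (bigD1 i) //= lerDl sumr_ge0 // => k _; rewrite sqr_ge0.
Qed.

Lemma qformD P Q x : qform (P + Q) x = qform P x + qform Q x.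
Proof. by rewrite /qform mulmxDr mulmxDl mxE. Qed.

Lemma qformB P Q x : qform (P - Q) x = qform P x - qform Q x.
Proof. by rewrite /qform mulmxBr mulmxBl !mxE. Qed.

Lemma qformZ a P x : qform (a *: P) x = a * qform P x.
Proof. by rewrite /qform -scalemxAr -scalemxAl mxE. Qed.

Lemma qform_sum (I : Type) (r : seq I) (F : I -> 'M[R]_n) x :
  qform (\sum_(i <- r) F i) x = \sum_(i <- r) qform (F i) x.
Proof.
apply: (big_morph (fun P => qform P x)) => [P Q|]; first exact: qformD.
by rewrite /qform mulmx0 mul0mx mxE.
Qed.

Lemma qform_congr P Q x : qform (P^T *m Q *m P) x = qform Q (P *m x).
Proof. by rewrite /qform trmx_mul !mulmxA. Qed.

Lemma qform_scalar_mx a x : qform a%:M x = a * sqnorm x.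
Proof. by rewrite -scalemx1 qformZ /qform mulmx1. Qed.

Lemma qform_gram P x : qform (P^T *m P) x = sqnorm (P *m x).
Proof. by rewrite -[P^T]mulmx1 qform_congr -[sqnorm _]mul1r -qform_scalar_mx. Qed.

Lemma loewner_le_qform P Q x : loewner_le P Q -> qform P x <= qform Q x.
Proof. by case=> _ /(_ x); rewrite qformB subr_ge0. Qed.

Lemma loewner_lt_qform P Q x : loewner_lt P Q -> qform P x <= qform Q x.
Proof.
case=> _ PltQ; have [->|x_neq0] := eqVneq x 0; last first.
  by move/ltW: (PltQ x x_neq0); rewrite qformB subr_ge0.
by rewrite /qform !mulmx0 mxE.
Qed.

Lemma loewner_leP P Q : P^T = P -> Q^T = Q ->
  (forall x, qform P x <= qform Q x) -> loewner_le P Q.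
Proof.
move=> symP symQ PleQ; split; first by rewrite linearB /= symP symQ.
by move=> x; rewrite qformB subr_ge0.
Qed.

Lemma loewner_ltP P Q : P^T = P -> Q^T = Q ->
  (forall x, x != 0 -> qform P x < qform Q x) -> loewner_lt P Q.
Proof.
move=> symP symQ PltQ; split; first by rewrite linearB /= symP symQ.
by move=> x /PltQ; rewrite qformB subr_gt0.
Qed.

End QuadraticForms.

Section EuclideanNorm.

Variables (R : rcfType) (n : nat).
Implicit Types (x y : 'cV[R]_n) (B : 'M[R]_n).

Lemma vnormE x : vnorm x = Num.sqrt (sqnorm x).
Proof. by rewrite /vnorm sqnormE. Qed.

Lemma vnorm_le_scale x y (a : R) : 0 <= a ->
  (vnorm x <= a * vnorm y) = (sqnorm x <= a ^+ 2 * sqnorm y).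
Proof.
move=> a_ge0; rewrite !vnormE -[a in a * _]ger0_norm // -sqrtr_sqr -sqrtrM ?sqr_ge0 //.
by rewrite ler_sqrt // mulr_ge0 ?sqr_ge0 ?sqnorm_ge0.
Qed.

Lemma vnorm_ge0 x : 0 <= vnorm x.
Proof. by rewrite vnormE sqrtr_ge0. Qed.

Lemma abs_coord_le x i : `|x i 0| <= vnorm x.
Proof.
rewrite -sqrtr_sqr vnormE ler_sqrt ?sqnorm_ge0 // sqnormE.
by rewrite (bigD1 i) //= lerDl sumr_ge0 // => j _; rewrite sqr_ge0.
Qed.

Definition mxbound B : R := \sum_i (\sum_j `|B i j|) ^+ 2.

Lemma mxbound_ge0 B : 0 <= mxbound B.
Proof. by rewrite sumr_ge0 // => i _; rewrite sqr_ge0. Qed.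

Lemma sqnorm_mulmx_le B x : sqnorm (B *m x) <= mxbound B * sqnorm x.
Proof.
rewrite sqnormE /mxbound mulr_suml; apply: ler_sum => i _.
rewrite -[sqnorm x]sqr_sqrtr ?sqnorm_ge0 // -vnormE -exprMn mxE -real_normK ?num_real //.
rewrite lerXn2r ?nnegrE ?mulr_ge0 ?sumr_ge0 ?vnorm_ge0 //.
apply: le_trans (ler_norm_sum _ _ _) _; rewrite mulr_suml; apply: ler_sum => j _.
by rewrite normrM ler_wpM2l ?abs_coord_le.
Qed.

End EuclideanNorm.

Section Windows.

Variables (Sigma : Type) (Z : biseq Sigma -> Prop).
Implicit Types (z : biseq Sigma) (t K : nat).

Lemma sofic_shift_closed z (s : int) : sofic Z -> Z z -> Z (fun i => z (i + s)).
Proof.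
case=> nv [ne [src [tgt [lab walkP]]]] /walkP[walk walk_z]; apply/walkP.
by exists (fun i => walk (i + s)) => i; rewrite addrAC; apply: walk_z.
Qed.

Definition window z t K : K.-tuple Sigma :=
  Tuple (introT eqP (size_mkseq (fun i => z (Posz (t + i))) K)).

Lemma inL_window z t K : sofic Z -> Z z -> inL Z (window z t K).
Proof.
move=> soficZ Zz; exists (fun i => z (i + Posz t)); split.
  exact: sofic_shift_closed.
by rewrite size_mkseq; apply: eq_map => i; rewrite -PoszD addnC.
Qed.

Lemma window_rcons z t K :
  rcons (window z t K) (z (Posz (t + K))) = window z t K.+1.
Proof. by rewrite /= mkseqS. Qed.

Lemma behead_window z t K : behead (window z t K.+1) = window z t.+1 K.
Proof.
rewrite /= /mkseq -[iota 1 K]/(iota (1 + 0) K) iotaDl -map_comp.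
by apply: eq_map => i /=; rewrite addnCA.
Qed.

Lemma dbedge_window z t K k : (0 < K)%N -> (k <= K)%N -> sofic Z -> Z z ->
  dbedge Z k (window z t K) (window z t.+1 K) (z (Posz (t + (K - k)))).
Proof.
case: K => // K _ k_le soficZ Zz; split; first exact: inL_window.
split; first exact: inL_window.
exists (z (Posz (t + K.+1))); rewrite window_rcons; split; [|split].
- by rewrite behead_window -addSnnS window_rcons.
- exact: inL_window.
- case: eqP => [->|/eqP k_neq0]; first by rewrite subn0.
  by rewrite nth_mkseq // ltn_subrL lt0n k_neq0.
Qed.

End Windows.

Section RealSequences.

Variable R : realFieldType.

Lemma geometric_decay (V : nat -> R) (g : R) : 0 <= g ->
  (forall t, V t.+1 <= g * V t) -> forall t, V t <= g ^+ t * V 0.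
Proof.
move=> g_ge0 Vstep; elim=> [|t IHt]; first by rewrite mul1r.
by rewrite exprS -mulrA (le_trans (Vstep t)) // ler_wpM2l.
Qed.

Lemma geometric_bound_of_tail (u : nat -> R) (g B C : R) (d : nat) :
  0 < g <= 1 -> 1 <= B -> 0 <= C -> (forall m, 0 <= u m) ->
  (forall m, u m <= B ^+ m * u 0%N) ->
  (forall t, u (t + d)%N <= C * g ^+ t * u d) ->
  forall m, u m <= (C + 1) * B ^+ d / g ^+ d * g ^+ m * u 0%N.
Proof.
move=> /andP[g_gt0 g_le1] B_ge1 C_ge0 u_ge0 growth tail m.
have gd_gt0 : 0 < g ^+ d by rewrite exprn_gt0.
have Bd_ge0 : 0 <= B ^+ d by rewrite exprn_ge0 // (le_trans ler01).
have [d_le_m|m_lt_d] := leqP d m.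
  rewrite -(subnK d_le_m) (le_trans (tail _)) // exprD.
  have -> : (C + 1) * B ^+ d / g ^+ d * (g ^+ (m - d) * g ^+ d) * u 0%N
          = (C + 1) * g ^+ (m - d) * (B ^+ d * u 0%N).
    by field; rewrite lt0r_neq0.
  have gmd_ge0 : 0 <= g ^+ (m - d) by rewrite exprn_ge0 ?ltW.
  by rewrite ler_pM ?mulr_ge0 ?u_ge0 ?growth // ler_wpM2r // lerDl.
have ratio_ge1 : 1 <= g ^+ m / g ^+ d.
  by rewrite ler_pdivlMr // mul1r (ler_wiXn2l (ltW g_gt0) g_le1 (ltnW m_lt_d)).
have -> : (C + 1) * B ^+ d / g ^+ d * g ^+ m * u 0%N
        = (C + 1) * (g ^+ m / g ^+ d) * (B ^+ d * u 0%N) by field; rewrite lt0r_neq0.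
apply: le_trans (growth m) _; rewrite -[X in X <= _]mul1r.
apply: ler_pM; rewrite ?mulr_ge0 ?u_ge0 ?exprn_ge0 ?(le_trans ler01) //.
  by rewrite (le_trans ratio_ge1) // ler_peMl ?lerDr // (le_trans ler01 ratio_ge1).
by rewrite ler_wpM2r ?u_ge0 // (ler_weXn2l B_ge1 (ltnW m_lt_d)).
Qed.

End RealSequences.

Lemma bernoulli_ineq (R : realDomainType) (q : R) (N : nat) :
  1 <= q -> 1 + N%:R * (q - 1) <= q ^+ N.
Proof.
move=> q_ge1; elim: N => [|N IHN]; first by rewrite mul0r addr0.
have : 0 <= N%:R * (q - 1) by rewrite mulr_ge0 // subr_ge0.
rewrite exprS -natr1; nra.
Qed.

Lemma exists_expr_gt (R : archiRealFieldType) (C q : R) : 1 < q ->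
  exists N0, forall N, (N0 <= N)%N -> C < q ^+ N.
Proof.
move=> q_gt1; have q1_gt0 : 0 < q - 1 by rewrite subr_gt0.
exists (Num.Def.archi_bound (`|C| / (q - 1))) => N N_ge.
have C_lt : `|C| < N%:R * (q - 1).
  rewrite -ltr_pdivrMr //; apply: lt_le_trans (archi_boundP _) _.
    by rewrite divr_ge0 // ltW.
  by rewrite ler_nat.
have := bernoulli_ineq N (ltW q_gt1); have := ler_norm C; lra.
Qed.

Section WordProducts.

Variables (R : nzRingType) (Sigma : Type) (n : nat) (A : Sigma -> 'M[R]_n).

Fixpoint word_mx (s : seq Sigma) : 'M[R]_n :=
  if s is a :: s' then word_mx s' *m A a else 1%:M.

Lemma word_mx_rcons s a : word_mx (rcons s a) = A a *m word_mx s.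
Proof. by elim: s => [|b s IHs] /=; rewrite ?mul1mx ?mulmx1 // IHs mulmxA. Qed.

Lemma Phi_word_mx k x z : Phi A k x z = word_mx (mkseq (fun i => z (Posz i)) k) *m x.
Proof.
elim: k => [|k IHk]; first by rewrite /= mul1mx.
by rewrite mkseqS word_mx_rcons -mulmxA -IHk.
Qed.

Lemma Phi_prefix (w : seq Sigma) z i x :
  [seq z (Posz t) | t <- iota 0 (size w)] = w -> (i <= size w)%N ->
  Phi A i x z = word_mx (take i w) *m x.
Proof.
move=> <-; rewrite size_map size_iota => i_le.
by rewrite Phi_word_mx -map_take take_iota (minn_idPl i_le).
Qed.

End WordProducts.

Lemma sqnorm_Phi_le (R : rcfType) (Sigma : Type) n (A : Sigma -> 'M[R]_n) (B : R) m x0 z :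
  (forall a, mxbound (A a) <= B) -> sqnorm (Phi A m x0 z) <= B ^+ m * sqnorm x0.
Proof.
move=> A_le_B; elim: m => [|m IHm] /=; first by rewrite mul1r.
rewrite (le_trans (sqnorm_mulmx_le _ _)) // exprS -mulrA.
by rewrite ler_pM ?mxbound_ge0 ?sqnorm_ge0.
Qed.

Section LyapunovDecay.

Variables (R : realFieldType) (Sigma : Type) (Z : biseq Sigma -> Prop) (n : nat).
Variables (A : Sigma -> 'M[R]_n) (K k : nat) (M1 M2 g : R) (Q : K.-tuple Sigma -> 'M[R]_n).
Hypotheses (soficZ : sofic Z) (K_gt0 : (0 < K)%N) (k_le_K : (k <= K)%N).
Hypotheses (M1_gt0 : 0 < M1) (g_ge0 : 0 <= g).
Hypothesis Q_bounds :
  forall w : K.-tuple Sigma, inL Z w -> loewner_le M1%:M (Q w) /\ loewner_le (Q w) M2%:M.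
Hypothesis Q_edge : forall (w j : K.-tuple Sigma) h, dbedge Z k w j h ->
  loewner_lt ((A h)^T *m Q j *m A h) (g ^+ 2 *: Q w).

Lemma sqnorm_Phi_tail_le z x0 t : Z z ->
  sqnorm (Phi A (t + (K - k)) x0 z)
    <= M2 / M1 * (g ^+ 2) ^+ t * sqnorm (Phi A (K - k) x0 z).
Proof.
move=> Zz; set d := (K - k)%N.
pose V s := qform (Q (window z s K)) (Phi A (s + d) x0 z).
have V_step s : V s.+1 <= g ^+ 2 * V s.
  have := loewner_lt_qform (Phi A (s + d) x0 z)
            (Q_edge (dbedge_window s K_gt0 k_le_K soficZ Zz)).
  by rewrite qform_congr qformZ.
have [V_lower _] := Q_bounds (inL_window t K soficZ Zz).
have [_ V_upper] := Q_bounds (inL_window 0 K soficZ Zz).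
have V_bounds : M1 * sqnorm (Phi A (t + d) x0 z)
                  <= (g ^+ 2) ^+ t * (M2 * sqnorm (Phi A d x0 z)).
  rewrite -!qform_scalar_mx (le_trans (loewner_le_qform _ V_lower)) //.
  rewrite (le_trans (geometric_decay (exprn_ge0 2 g_ge0) V_step t)) //.
  by rewrite ler_wpM2l ?exprn_ge0 // /V add0n loewner_le_qform.
have -> : M2 / M1 * (g ^+ 2) ^+ t * sqnorm (Phi A d x0 z)
        = (g ^+ 2) ^+ t * (M2 * sqnorm (Phi A d x0 z)) / M1 by field; rewrite lt0r_neq0.
by rewrite ler_pdivlMr // mulrC.
Qed.

End LyapunovDecay.

Definition exp_stable (R : rcfType) (Sigma : Type) (n : nat)
    (Z : biseq Sigma -> Prop) (A : Sigma -> 'M[R]_n) (g : R) : Prop :=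
  exists c : R, 0 < c /\
    forall (k : nat) (x0 : 'cV[R]_n) (z : biseq Sigma), Z z ->
      vnorm (Phi A k x0 z) <= c * g ^+ k * vnorm x0.

Definition dbgraph_lyapunov (R : numDomainType) (Sigma : Type) (n M : nat)
    (Z : biseq Sigma -> Prop) (A : Sigma -> 'M[R]_n) (g : R) : Prop :=
  exists (K k : nat) (M1 M2 : R) (Q : K.-tuple Sigma -> 'M[R]_n),
    [/\ [/\ (maxn M 1 <= K)%N, (k <= K)%N, 0 < M1 & 0 < M2],
      (forall w : K.-tuple Sigma, inL Z w -> pd (Q w)),
      (forall w : K.-tuple Sigma, inL Z w ->
         loewner_le (M1%:M) (Q w) /\ loewner_le (Q w) (M2%:M)) &
      (forall (w j : K.-tuple Sigma) (h : Sigma), dbedge Z k w j h ->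
         loewner_lt ((A h)^T *m Q j *m A h) (g ^+ 2 *: Q w))].

Lemma exp_stable_of_dbgraph_lyapunov (R : rcfType) (Sigma : finType) (n M : nat)
    (Z : biseq Sigma -> Prop) (A : Sigma -> 'M[R]_n) (g : R) :
  sofic Z -> 0 < g <= 1 -> dbgraph_lyapunov M Z A g -> exp_stable Z A g.
Proof.
move=> soficZ g_range [K [k [M1 [M2 [Q [[K_ge k_le M1_gt0 M2_gt0] _ Q_bounds Q_edge]]]]]].
have K_gt0 : (0 < K)%N by apply: leq_trans K_ge; rewrite leq_maxr.
have /andP[g_gt0 g_le1] := g_range.
set B := 1 + \sum_a mxbound (A a).
have B_ge1 : 1 <= B by rewrite lerDl sumr_ge0 // => a _; apply: mxbound_ge0.
have A_le_B a : mxbound (A a) <= B.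
  rewrite /B (bigD1 a) //= addrCA lerDl addr_ge0 // sumr_ge0 // => b _.
  exact: mxbound_ge0.
set d := (K - k)%N.
set C := (M2 / M1 + 1) * B ^+ d / (g ^+ 2) ^+ d.
have B_gt0 : 0 < B := lt_le_trans ltr01 B_ge1.
have C_gt0 : 0 < C by rewrite divr_gt0 ?exprn_gt0 // mulr_gt0 ?exprn_gt0 // addr_gt0 ?divr_gt0.
exists (Num.sqrt C); split=> [|m x0 z Zz]; first by rewrite sqrtr_gt0.
have gm_ge0 : 0 <= g ^+ m by rewrite exprn_ge0 // ltW.
rewrite vnorm_le_scale ?mulr_ge0 ?sqrtr_ge0 // exprMn sqr_sqrtr ?(ltW C_gt0) // exprAC.
rewrite /C; apply: (geometric_bound_of_tail (u := fun m => sqnorm (Phi A m x0 z))).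
- by rewrite exprn_gt0 //= exprn_ile1 // ltW.
- exact: B_ge1.
- by rewrite divr_ge0 // ltW.
- by move=> i; apply: sqnorm_ge0.
- by move=> i; apply: sqnorm_Phi_le.
- by move=> t; apply: (sqnorm_Phi_tail_le (Q := Q)) Zz => //; apply: ltW.
Qed.

Section LyapunovMatrix.

Variables (R : realFieldType) (Sigma : Type) (n : nat) (A : Sigma -> 'M[R]_n).
Implicit Types (r : R) (N : nat) (w : seq Sigma) (x : 'cV[R]_n).

Definition lyap_mx r N w : 'M[R]_n :=
  \sum_(i < N) r^-1 ^+ i *: ((word_mx A (take i w))^T *m word_mx A (take i w)).

Lemma lyap_mx_sym r N w : (lyap_mx r N w)^T = lyap_mx r N w.
Proof.
rewrite /lyap_mx linear_sum; apply: eq_bigr => i _.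
by rewrite linearZ /= trmx_mul trmxK.
Qed.

Lemma qform_lyap_mx r N w x :
  qform (lyap_mx r N w) x = \sum_(i < N) r^-1 ^+ i * sqnorm (word_mx A (take i w) *m x).
Proof. by rewrite qform_sum; apply: eq_bigr => i _; rewrite qformZ qform_gram. Qed.

Lemma sqnorm_le_qform_lyap_mx r N w x : (0 < N)%N -> 0 <= r ->
  sqnorm x <= qform (lyap_mx r N w) x.
Proof.
case: N => // N _ r_ge0; rewrite qform_lyap_mx big_ord_recl take0 /= mul1r mul1mx lerDl.
by rewrite sumr_ge0 // => i _; rewrite mulr_ge0 ?sqnorm_ge0 ?exprn_ge0 ?invr_ge0.
Qed.

(* Only the first [size s + 1] prefixes of [rcons s a] occur, and
   [word_mx (take i s) *m A h] is the product along the prefix of length [i + 1] of [h :: s]. *)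
Lemma qform_lyap_mx_shift r (s : seq Sigma) h a x : r != 0 ->
  qform (lyap_mx r (size s).+1 (rcons s a)) (A h *m x) =
  r * (qform (lyap_mx r (size s).+1 (h :: s)) x - sqnorm x
        + r^-1 ^+ (size s).+1 * sqnorm (word_mx A (h :: s) *m x)).
Proof.
move=> r_neq0; set N := (size s).+1; set b := r^-1.
pose u i := sqnorm (word_mx A (take i (h :: s)) *m x).
have -> : sqnorm (word_mx A (h :: s) *m x) = u N by rewrite /u take_oversize.
have -> : sqnorm x = u 0%N by rewrite /u /= mul1mx.
have -> : qform (lyap_mx r N (h :: s)) x = \sum_(i < N.+1) b ^+ i * u i - b ^+ N * u N.
  by rewrite big_ord_recr addrK qform_lyap_mx.
rewrite big_ord_recl mul1r addrAC subrK addrC addKr qform_lyap_mx mulr_sumr.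
apply: eq_bigr => i _.
have i_le : (i <= size s)%N := ltn_ord i.
by rewrite -cats1 takel_cat // mulmxA exprS [r * _]mulrA mulrA /b mulfV // mul1r.
Qed.

End LyapunovMatrix.

Lemma dbedge_full_shift (Sigma : Type) (Z : biseq Sigma -> Prop) (K : nat)
    (w j : K.-tuple Sigma) (h : Sigma) : (0 < K)%N -> dbedge Z K w j h ->
  exists a, (w : seq Sigma) = h :: behead w /\ (j : seq Sigma) = rcons (behead w) a.
Proof.
move=> K_gt0 [_ [_ [a [-> [_ ->]]]]]; exists a; split=> //.
rewrite eqn0Ngt K_gt0 subnn /=.
by move: (size_tuple w) K_gt0; case: (tval w) => [<-|].
Qed.

Section LyapunovFromDecay.

Variables (R : realFieldType) (Sigma : Type) (Z : biseq Sigma -> Prop) (n : nat).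
Variables (A : Sigma -> 'M[R]_n) (rho g c : R).
Hypotheses (rho_ge0 : 0 <= rho) (rho_le_g : rho <= g) (g_gt0 : 0 < g).
Hypothesis energy : forall (w : seq Sigma) i x, inL Z w -> (i <= size w)%N ->
  sqnorm (word_mx A (take i w) *m x) <= c ^+ 2 * (rho ^+ 2) ^+ i * sqnorm x.

Lemma qform_lyap_mx_le N w x : inL Z w -> (N <= size w)%N ->
  qform (lyap_mx A (g ^+ 2) N w) x <= N%:R * c ^+ 2 * sqnorm x.
Proof.
move=> Lw N_le; rewrite qform_lyap_mx -mulrA mulr_natl -[in X in _ <= X](card_ord N).
rewrite -sumr_const; apply: ler_sum => i _.
have i_le : (i <= size w)%N by rewrite (leq_trans _ N_le) // ltnW.
have ratio_le1 : (g ^+ 2)^-1 * rho ^+ 2 <= 1.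
  by rewrite mulrC ler_pdivrMr ?exprn_gt0 // mul1r lerXn2r ?nnegrE // ltW.
have inv_ge0 : 0 <= (g ^+ 2)^-1 by rewrite invr_ge0 exprn_ge0 // ltW.
apply: le_trans (ler_wpM2l (exprn_ge0 i inv_ge0) (energy x Lw i_le)) _.
have -> : (g ^+ 2)^-1 ^+ i * (c ^+ 2 * (rho ^+ 2) ^+ i * sqnorm x)
        = c ^+ 2 * sqnorm x * ((g ^+ 2)^-1 * rho ^+ 2) ^+ i.
  by rewrite [in RHS]exprMn; move: (_ ^+ i) (_ ^+ i) => p q; ring.
have cX_ge0 : 0 <= c ^+ 2 * sqnorm x by rewrite mulr_ge0 ?sqnorm_ge0 ?sqr_ge0.
by rewrite ler_piMr // exprn_ile1 // mulr_ge0 // sqr_ge0.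
Qed.

Lemma lyap_mx_edge N (w j : N.-tuple Sigma) h :
  (0 < N)%N -> c ^+ 2 * (rho ^+ 2) ^+ N < (g ^+ 2) ^+ N -> dbedge Z N w j h ->
  loewner_lt ((A h)^T *m lyap_mx A (g ^+ 2) N j *m A h) (g ^+ 2 *: lyap_mx A (g ^+ 2) N w).
Proof.
move=> N_gt0 decay wjh; have [a []] := dbedge_full_shift N_gt0 wjh.
set s := behead w => Ew Ej.
have sN : (size s).+1 = N by rewrite size_behead size_tuple prednK.
apply: loewner_ltP.
- by rewrite !trmx_mul trmxK lyap_mx_sym mulmxA.
- by rewrite linearZ /= lyap_mx_sym.
move=> x x_neq0; rewrite qform_congr qformZ.
have g2_neq0 : g ^+ 2 != 0 by rewrite expf_neq0 // lt0r_neq0.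
have := qform_lyap_mx_shift A s h a x g2_neq0; rewrite sN -Ej -Ew => ->.
have W_le := energy x wjh.1 (eq_leq (esym (size_tuple w))).
rewrite take_oversize ?size_tuple // in W_le.
have W_lt : (g ^+ 2)^-1 ^+ N * sqnorm (word_mx A w *m x) < sqnorm x.
  rewrite exprVn mulrC ltr_pdivrMr ?exprn_gt0 // (le_lt_trans W_le) //.
  by rewrite [X in _ < X]mulrC ltr_pM2r ?sqnorm_gt0.
rewrite ltr_pM2l ?exprn_gt0 //; lra.
Qed.

End LyapunovFromDecay.

Lemma dbgraph_lyapunov_of_exp_stable (R : archiRcfType) (Sigma : Type) (n M : nat)
    (Z : biseq Sigma -> Prop) (A : Sigma -> 'M[R]_n) (rho g : R) :
  0 < rho < g -> exp_stable Z A rho -> dbgraph_lyapunov M Z A g.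
Proof.
move=> /andP[rho_gt0 rho_lt_g] [c [c_gt0 stable]].
have g_gt0 : 0 < g := lt_trans rho_gt0 rho_lt_g.
have energy w i x : inL Z w -> (i <= size w)%N ->
    sqnorm (word_mx A (take i w) *m x) <= c ^+ 2 * (rho ^+ 2) ^+ i * sqnorm x.
  case=> z [Zz wz] i_le; rewrite -(Phi_prefix A x wz i_le) exprAC -exprMn.
  by rewrite -vnorm_le_scale ?stable // mulr_ge0 ?exprn_ge0 // ltW.
have ratio_gt1 : 1 < g ^+ 2 / rho ^+ 2.
  by rewrite ltr_pdivlMr ?exprn_gt0 // mul1r ltrXn2r // ltW.
have [N0 N0_large] := exists_expr_gt (c ^+ 2) ratio_gt1.
set N := maxn (maxn M 1) N0.
have N_gt0 : (0 < N)%N by rewrite (leq_trans _ (leq_maxl _ _)) ?leq_maxr.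
have decay : c ^+ 2 * (rho ^+ 2) ^+ N < (g ^+ 2) ^+ N.
  by rewrite -ltr_pdivlMr ?exprn_gt0 // -expr_div_n N0_large ?leq_maxr.
exists N, N, 1, (N%:R * c ^+ 2), (lyap_mx A (g ^+ 2) N); split.
- by rewrite leq_maxl leqnn ltr01 mulr_gt0 ?exprn_gt0 ?ltr0n.
- move=> w _; split=> [|x x_neq0]; first exact: lyap_mx_sym.
  by rewrite (lt_le_trans (sqnorm_gt0 x_neq0)) ?sqnorm_le_qform_lyap_mx ?exprn_ge0 ?ltW.
- move=> w Lw; split; apply: loewner_leP; rewrite ?lyap_mx_sym ?tr_scalar_mx // => x.
    by rewrite qform_scalar_mx mul1r sqnorm_le_qform_lyap_mx ?exprn_ge0 ?ltW.
  have := qform_lyap_mx_le (ltW rho_gt0) (ltW rho_lt_g) g_gt0 energy x Lw.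
  by rewrite qform_scalar_mx size_tuple => ->.
- by move=> w j h; apply: (@lyap_mx_edge _ _ _ _ A rho g c g_gt0 energy).
Qed.

Theorem mainTheorem11 (R : realType) (Sigma : finType) (M n : nat)
    (Z : biseq Sigma -> Prop) (A : Sigma -> 'M[R]_n) (gamma : R) :
  sofic Z -> finite_type Z M -> 0 <= gamma < 1 ->
  (forall gt : R, gamma < gt < 1 ->
     exists c : R, 0 < c /\
       forall (k : nat) (x0 : 'cV[R]_n) (z : biseq Sigma), Z z ->
         vnorm (Phi A k x0 z) <= c * gt ^+ k * vnorm x0)
  <->
  (forall gt : R, gamma < gt < 1 ->
     exists (K k : nat) (M1 M2 : R) (Q : K.-tuple Sigma -> 'M[R]_n),
       [/\ [/\ (maxn M 1 <= K)%N, (k <= K)%N, 0 < M1 & 0 < M2],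
         (forall w : K.-tuple Sigma, inL Z w -> pd (Q w)),
         (forall w : K.-tuple Sigma, inL Z w ->
            loewner_le (M1%:M) (Q w) /\ loewner_le (Q w) (M2%:M)) &
         (forall (w j : K.-tuple Sigma) (h : Sigma), dbedge Z k w j h ->
            loewner_lt ((A h)^T *m Q j *m A h) (gt ^+ 2 *: Q w))]).
Proof.
move=> soficZ _ /andP[gamma_ge0 _]; split=> [stable g /andP[gamma_lt_g g_lt1]|lyap g g_range].
  apply: (@dbgraph_lyapunov_of_exp_stable _ _ _ _ _ _ ((gamma + g) / 2)).
    apply/andP; split; lra.
  by apply: stable; apply/andP; split; lra.
apply: exp_stable_of_dbgraph_lyapunov soficZ _ (lyap g g_range).
by case/andP: g_range => gamma_lt_g /ltW ->; rewrite andbT (le_lt_trans gamma_ge0).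
Qed.
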